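(* Let $s=0$, $\lambda\in\mathbb{C}$ and $k\in\mathbb{Z}\setminus\{0\}$. Every even superderivation of $\mathfrak{L}^0_\lambda$ of degree $k$ is inner; more precisely, it equals $\mathrm{ad}(aL_k+bI_k)$ for some $a,b\in\mathbb{C}$.
   Context: For $s\in\{0,\tfrac12\}$ and $\lambda\in\mathbb{C}$, $\mathfrak{L}^s_\lambda$ is the complex Lie superalgebra with basis $\{L_m,I_m,G_p,H_p : m\in\mathbb{Z},\ p\in s+\mathbb{Z}\}$, even part spanned by the $L_m,I_m$, odd part spanned by the $G_p,H_p$, and brackets $[L_m,L_n]=(m-n)L_{m+n}$, $[L_m,I_n]=(m-n)I_{m+n}$, $[L_m,H_p]=(\tfrac m2-p)H_{m+p}$, $[L_m,G_p]=(\tfrac m2-p)G_{m+p}+\lambda(m+1)H_{m+p}$, $[I_m,G_p]=(m-2p)H_{m+p}$, $[G_p,G_q]=I_{p+q}$, plus those given by super-antisymmetry $[y,x]=-(-1)^{|x||y|}[x,y]$; all other brackets of basis elements are zero. The algebra is graded by $\tfrac12\mathbb{Z}$: $\mathfrak{L}_r$ is spanned by the basis elements with index $r$. A superderivation of parity $a$ is a linear map $D$ shifting parity by $a$ with $D([x,y])=[D(x),y]+(-1)^{a|x|}[x,D(y)]$ for homogeneous $x,y$; it has degree $r$ if $D(\mathfrak{L}_q)\subset\mathfrak{L}_{q+r}$ for all $q$. $\mathrm{ad}\,x(y)=[x,y]$. *)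

From HB Require Import structures.
From mathcomp Require Import all_boot all_order all_algebra.
Set Implicit Arguments. Unset Strict Implicit. Unset Printing Implicit Defensive.
Import Order.TTheory GRing.Theory Num.Theory.
Local Open Scope ring_scope.

(* Basis of L^0_lambda (s = 0, so all indices are integers). *)
Inductive basis := bL of int | bI of int | bG of int | bH of int.

Definition basis_code (b : basis) : nat * int :=
  match b with bL m => (0%N, m) | bI m => (1%N, m) | bG m => (2%N, m) | bH m => (3%N, m) end.
Definition basis_decode (c : nat * int) : option basis :=
  match c with
  | (0%N, m) => Some (bL m) | (1%N, m) => Some (bI m)
  | (2%N, m) => Some (bG m) | (3%N, m) => Some (bH m) | _ => None end.
Lemma basis_codeK : pcancel basis_code basis_decode. Proof. by case. Qed.
HB.instance Definition _ := Equality.copy basis (pcan_type basis_codeK).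

(* parity: false = even (L, I), true = odd (G, H) *)
Definition bpar (b : basis) : bool :=
  match b with bL _ | bI _ => false | bG _ | bH _ => true end.
Definition bdeg (b : basis) : int :=
  match b with bL m | bI m | bG m | bH m => m end.

Section Alg.
Variable F : fieldType.

(* An element of the algebra is a formal finite linear combination of basis
   vectors; two formal combinations are the same element iff they have the
   same coefficients. *)
Definition elt := seq (F * basis).
Definition coef (v : elt) (e : basis) : F := \sum_(p <- v | p.2 == e) p.1.
Definition eq_elt (v w : elt) : Prop := forall e, coef v e = coef w e.
Definition scale_elt (a : F) (v : elt) : elt := [seq (a * p.1, p.2) | p <- v].

Definition half : F := 2^-1.

(* Brackets of basis elements (including those given by super-antisymmetry). *)
Definition bbr (lam : F) (x y : basis) : elt :=
  match x, y with
  | bL m, bL n => [:: ((m - n)%:~R, bL (m + n))]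
  | bL m, bI n => [:: ((m - n)%:~R, bI (m + n))]
  | bI n, bL m => [:: (- (m - n)%:~R, bI (m + n))]
  | bL m, bH p => [:: (m%:~R * half - p%:~R, bH (m + p))]
  | bH p, bL m => [:: (- (m%:~R * half - p%:~R), bH (m + p))]
  | bL m, bG p => [:: (m%:~R * half - p%:~R, bG (m + p));
                      (lam * (m + 1)%:~R, bH (m + p))]
  | bG p, bL m => [:: (- (m%:~R * half - p%:~R), bG (m + p));
                      (- (lam * (m + 1)%:~R), bH (m + p))]
  | bI m, bG p => [:: ((m - 2 * p)%:~R, bH (m + p))]
  | bG p, bI m => [:: (- (m - 2 * p)%:~R, bH (m + p))]
  | bG p, bG q => [:: (1, bI (p + q))]
  | _, _ => [::]
  end.

Definition br (lam : F) (v w : elt) : elt :=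
  flatten [seq scale_elt (p.1 * q.1) (bbr lam p.2 q.2) | p <- v, q <- w].

Definition lin_ext (d : basis -> elt) (v : elt) : elt :=
  flatten [seq scale_elt p.1 (d p.2) | p <- v].

Definition in_parity (a : bool) (v : elt) : Prop :=
  forall e, coef v e != 0 -> bpar e = a.
Definition in_degree (q : int) (v : elt) : Prop :=
  forall e, coef v e != 0 -> bdeg e = q.

Definition even_superder_deg (lam : F) (k : int) (d : basis -> elt) : Prop :=
  [/\ forall (a : bool) v, in_parity a v -> in_parity a (lin_ext d v),
      forall q v, in_degree q v -> in_degree (q + k) (lin_ext d v)
    & forall x y (a b : bool), in_parity a x -> in_parity b y ->
        eq_elt (lin_ext d (br lam x y))
               (br lam (lin_ext d x) y ++ br lam x (lin_ext d y))].
End Alg.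

(* Parity and degree force D(L_0) = a L_k + b I_k and D y to lie in the span of
   the two basis vectors of the parity of y and degree deg y + k.  Apply D to
   [L_0, y] = -(deg y) y (plus lam H_p when y = G_p): since [L_0, _] acts on
   degree deg y + k essentially as -(deg y + k), the terms in D y cancel up to
   k D y, leaving k D y = [D(L_0), y] (for G_p after substituting the already
   known D(H_p)).  As k is invertible in characteristic 0, D = ad (D(L_0) / k). *)

From Pilot Require Import Defs.
From mathcomp Require Import all_boot all_order all_algebra.
From mathcomp Require Import zify ring.
Set Implicit Arguments. Unset Strict Implicit.
Import Order.TTheory GRing.Theory Num.Theory.
Local Open Scope ring_scope.

Section Coefficients.
Variables (F : fieldType) (lam : F).
Implicit Types (v w : elt F) (d : basis -> elt F).

Lemma coef_nil e : coef ([::] : elt F) e = 0.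
Proof. by rewrite /coef big_nil. Qed.

Lemma coef_cons (c : F) f v e :
  coef ((c, f) :: v) e = (if f == e then c else 0) + coef v e.
Proof. by rewrite /coef big_cons /=; case: ifP; rewrite ?add0r. Qed.

Lemma coef_cat v w e : coef (v ++ w) e = coef v e + coef w e.
Proof. by rewrite /coef big_cat. Qed.

Lemma coef_scale (a : F) v e : coef (scale_elt a v) e = a * coef v e.
Proof. by rewrite /coef /scale_elt big_map /= mulr_sumr. Qed.

Lemma coef_flatten (s : seq (elt F)) e :
  coef (flatten s) e = \sum_(v <- s) coef v e.
Proof.
elim: s => [|v s IH]; first by rewrite big_nil coef_nil.
by rewrite /= coef_cat IH big_cons.
Qed.

Lemma coef_lin_ext d v e :
  coef (lin_ext d v) e = \sum_(p <- v) p.1 * coef (d p.2) e.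
Proof.
by rewrite coef_flatten big_map; apply: eq_bigr => p _; rewrite coef_scale.
Qed.

Lemma coef_br v w e :
  coef (br lam v w) e =
  \sum_(p <- v) \sum_(q <- w) p.1 * q.1 * coef (bbr lam p.2 q.2) e.
Proof.
rewrite coef_flatten big_allpairs_dep; apply: eq_bigr => p _.
by apply: eq_bigr => q _; rewrite coef_scale.
Qed.

Lemma scale1_elt v : scale_elt 1 v = v.
Proof. by rewrite -[RHS]map_id; apply: eq_map => -[a f]; rewrite mul1r. Qed.

Lemma lin_ext1 d y : lin_ext d [:: (1, y)] = d y.
Proof. by rewrite /lin_ext /= cats0 scale1_elt. Qed.

Lemma br11 x y : br lam [:: (1, x)] [:: (1, y)] = bbr lam x y.
Proof. by rewrite /br /= cats0 mulr1 scale1_elt. Qed.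

Lemma coef_br1r v y e :
  coef (br lam v [:: (1, y)]) e = \sum_(p <- v) p.1 * coef (bbr lam p.2 y) e.
Proof. by rewrite coef_br; apply: eq_bigr => p _; rewrite big_seq1 mulr1. Qed.

Lemma coef_br1l x w e :
  coef (br lam [:: (1, x)] w) e = \sum_(q <- w) q.1 * coef (bbr lam x q.2) e.
Proof. by rewrite coef_br big_seq1; apply: eq_bigr => q _; rewrite mul1r. Qed.

Lemma sum_elt_supp w (S : seq basis) (h : basis -> F) :
  uniq S -> (forall f, f \notin S -> coef w f = 0) ->
  \sum_(p <- w) p.1 * h p.2 = \sum_(f <- S) coef w f * h f.
Proof.
move=> uS w_supp.
pose T := S ++ [seq f <- undup (map snd w) | f \notin S].
have uT : uniq T.
  rewrite cat_uniq uS filter_uniq ?undup_uniq //= andbT.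
  by apply/hasPn => f; rewrite mem_filter => /andP [].
have wT p : p \in w -> p.2 \in T.
  move=> pw; rewrite mem_cat mem_filter mem_undup.
  by case: (boolP (p.2 \in S)) => //= _; apply/mapP; exists p.
have coefE f : \sum_(p <- w) (if p.2 == f then p.1 * h f else 0) = coef w f * h f.
  by rewrite /coef mulr_suml /= [RHS]big_mkcond.
transitivity (\sum_(p <- w) \sum_(f <- T) (if p.2 == f then p.1 * h f else 0)).
  rewrite big_seq [RHS]big_seq; apply: eq_bigr => p pw.
  rewrite (bigD1_seq p.2) ?wT //= eqxx big1 ?addr0 //.
  by move=> f /negbTE; rewrite eq_sym => ->.
rewrite exchange_big big_cat /= [X in _ + X]big1_seq ?addr0.
  by apply: eq_bigr => f _; rewrite coefE.
by move=> f /andP [_]; rewrite mem_filter => /andP [fS _]; rewrite coefE w_supp ?mul0r.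
Qed.

Lemma lin_ext_eq_br d x :
  (forall y e, coef (d y) e = coef (br lam x [:: (1, y)]) e) ->
  forall v, eq_elt (lin_ext d v) (br lam x v).
Proof.
move=> dE v e; rewrite coef_lin_ext coef_br exchange_big /=.
apply: eq_bigr => q _; rewrite dE coef_br1r mulr_sumr.
by apply: eq_bigr => p _; rewrite mulrCA mulrA.
Qed.

End Coefficients.

Lemma basis_eqE (x y : basis) : (x == y) = (basis_code x == basis_code y).
Proof. by []. Qed.

Definition shifted_basis (k : int) (y : basis) : seq basis :=
  if bpar y then [:: bG (bdeg y + k); bH (bdeg y + k)]
  else [:: bL (bdeg y + k); bI (bdeg y + k)].

Lemma shifted_basis_uniq k y : uniq (shifted_basis k y).
Proof. by rewrite /shifted_basis; case: (bpar y). Qed.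

Lemma coef1 (F : fieldType) (y e : basis) :
  coef ([:: (1, y)] : elt F) e = if y == e then 1 else 0.
Proof. by rewrite coef_cons coef_nil addr0. Qed.

Lemma in_parity1 (F : fieldType) y : in_parity (bpar y) ([:: (1, y)] : elt F).
Proof. by move=> e; rewrite coef1; case: (y =P e) => [->|]; rewrite ?eqxx. Qed.

Lemma in_degree1 (F : fieldType) y : in_degree (bdeg y) ([:: (1, y)] : elt F).
Proof. by move=> e; rewrite coef1; case: (y =P e) => [->|]; rewrite ?eqxx. Qed.

Lemma pchar0_intr_neq0 (F : fieldType) (k : int) :
  [pchar F] =i pred0 -> k != 0 -> k%:~R != 0 :> F.
Proof.
move=> /(pcharf0P F) natf_eq0; case: k => n kn0.
  by rewrite [_%:~R]/= natf_eq0; apply: contra kn0 => /eqP ->.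
by rewrite NegzE rmorphN /= oppr_eq0 natf_eq0.
Qed.

Section EvenSuperderivation.
Variables (F : fieldType) (lam : F) (k : int) (d : basis -> elt F).
Hypothesis d_der : even_superder_deg lam k d.

Lemma superder_coef_supp y f : f \notin shifted_basis k y -> coef (d y) f = 0.
Proof.
case: d_der => d_par d_deg _; apply: contraNeq => nz.
have := d_par _ _ (@in_parity1 F y) f; rewrite lin_ext1 => /(_ nz) par_f.
have := d_deg _ _ (@in_degree1 F y) f; rewrite lin_ext1 => /(_ nz) deg_f.
rewrite /shifted_basis -par_f -deg_f.
by case: f {nz par_f deg_f} => n /=; rewrite !inE eqxx ?orbT.
Qed.

Lemma sum_superder_supp y (h : basis -> F) :
  \sum_(p <- d y) p.1 * h p.2 = \sum_(f <- shifted_basis k y) coef (d y) f * h f.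
Proof. exact/sum_elt_supp/superder_coef_supp/shifted_basis_uniq. Qed.

Lemma coef_superder_L0_bracket y e :
  \sum_(p <- bbr lam (bL 0) y) p.1 * coef (d p.2) e =
  \sum_(f <- shifted_basis k (bL 0)) coef (d (bL 0)) f * coef (bbr lam f y) e +
  \sum_(f <- shifted_basis k y) coef (d y) f * coef (bbr lam (bL 0) f) e.
Proof.
case: d_der => _ _ /(_ [:: (1, bL 0)] [:: (1, y)] false (bpar y)).
move=> /(_ (@in_parity1 F _) (@in_parity1 F _) e).
rewrite br11 coef_lin_ext !lin_ext1 coef_cat coef_br1r coef_br1l => ->.
by congr (_ + _); apply: sum_superder_supp.
Qed.

Hypothesis k_neq0 : k%:~R != 0 :> F.

Ltac decide_int_eqs := repeat match goal with
  | |- context [(?x == ?y)] =>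
    first [ rewrite (_ : (x == y) = true); last by apply/eqP; lia
          | rewrite (_ : (x == y) = false); last by apply/negbTE/eqP => ?; lia ]
  end.

Ltac simpl_coefs :=
  rewrite ?big_cons ?big_nil ?coef_cons ?coef_nil ?basis_eqE /= ?xpair_eqE /=;
  decide_int_eqs; rewrite /=.

(* Multiplied by [k], the goal is the equation [E] up to field arithmetic. *)
Ltac solve_from E :=
  let E0 := fresh in
  move/eqP: (E); rewrite -subr_eq0 => /eqP E0;
  apply: (mulfI k_neq0); apply/eqP; rewrite -subr_eq0; apply/eqP;
  match type of E0 with ?Z = 0 =>
    first [ transitivity Z; [by field; rewrite ?k_neq0 | exact E0]
          | transitivity (- Z); [by field; rewrite ?k_neq0 | by rewrite E0 oppr0] ]
  end.

Ltac compare_coefs n m E1 E2 :=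
  case: (n =P m + k) => [->|?]; simpl_coefs; rewrite ?addr0 //;
  try (apply: superder_coef_supp; rewrite /shifted_basis /= ?inE; simpl_coefs; done);
  try solve_from E1; try solve_from E2.

Definition scaled_der_L0 : elt F :=
  [:: (coef (d (bL 0)) (bL k) / k%:~R, bL k); (coef (d (bL 0)) (bI k) / k%:~R, bI k)].

Lemma coef_superder_bL m e :
  coef (d (bL m)) e = coef (br lam scaled_der_L0 [:: (1, bL m)]) e.
Proof.
have E1 := coef_superder_L0_bracket (bL m) (bL (m + k)).
have E2 := coef_superder_L0_bracket (bL m) (bI (m + k)).
move: E1 E2; rewrite /shifted_basis /= add0r; simpl_coefs; rewrite !add0r => E1 E2.
case: e => n; compare_coefs n m E1 E2.
Qed.

Lemma coef_superder_bI m e :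
  coef (d (bI m)) e = coef (br lam scaled_der_L0 [:: (1, bI m)]) e.
Proof.
have E1 := coef_superder_L0_bracket (bI m) (bL (m + k)).
have E2 := coef_superder_L0_bracket (bI m) (bI (m + k)).
move: E1 E2; rewrite /shifted_basis /= add0r; simpl_coefs; rewrite !add0r => E1 E2.
case: e => n; compare_coefs n m E1 E2.
Qed.

Lemma coef_superder_bH m e :
  coef (d (bH m)) e = coef (br lam scaled_der_L0 [:: (1, bH m)]) e.
Proof.
have E1 := coef_superder_L0_bracket (bH m) (bG (m + k)).
have E2 := coef_superder_L0_bracket (bH m) (bH (m + k)).
move: E1 E2; rewrite /shifted_basis /= add0r; simpl_coefs; rewrite !add0r => E1 E2.
have dHG : coef (d (bH m)) (bG (m + k)) = 0 by solve_from E1.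
rewrite dHG in E2.
case: e => n; compare_coefs n m E1 E2.
Qed.

Lemma coef_superder_bG m e :
  coef (d (bG m)) e = coef (br lam scaled_der_L0 [:: (1, bG m)]) e.
Proof.
have E1 := coef_superder_L0_bracket (bG m) (bG (m + k)).
have E2 := coef_superder_L0_bracket (bG m) (bH (m + k)).
move: E1 E2; rewrite /shifted_basis /= add0r; simpl_coefs; rewrite !add0r.
rewrite !coef_superder_bH; simpl_coefs => E1 E2.
have dGG : coef (d (bG m)) (bG (m + k)) =
    coef (d (bL 0)) (bL k) / k%:~R * (k%:~R * Defs.half F - m%:~R).
  by solve_from E1.
rewrite dGG in E2.
case: e => n; compare_coefs n m E1 E2; rewrite dGG; field; rewrite ?k_neq0.
Qed.

Lemma coef_superder_inner y e :
  coef (d y) e = coef (br lam scaled_der_L0 [:: (1, y)]) e.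
Proof.
case: y => m.
- exact: coef_superder_bL.
- exact: coef_superder_bI.
- exact: coef_superder_bG.
- exact: coef_superder_bH.
Qed.

End EvenSuperderivation.

Theorem lemma2p2 (F : fieldType) (hF : [pchar F] =i pred0) (lam : F) (k : int)
  (hk : k != 0) (d : basis -> elt F) :
  even_superder_deg lam k d ->
  exists a b : F,
    forall v : elt F,
      eq_elt (lin_ext d v) (br lam [:: (a, bL k); (b, bI k)] v).
Proof.
move=> d_der; have k_neq0 := pchar0_intr_neq0 hF hk.
exists (coef (d (bL 0)) (bL k) / k%:~R), (coef (d (bL 0)) (bI k) / k%:~R).
exact/lin_ext_eq_br/(coef_superder_inner d_der k_neq0).
Qed.
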